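(* Let $a\in(0,0.5)$. Let $f(\phi\mid \mathrm{HS+})$ and $f(\phi\mid\mathrm{HTHS+})$ denote the univariate marginal prior densities of $\phi$ under the HS+ and HTHS+ priors (defined in the context). Then there exist positive numbers $C_a$ and $D_a$ such that for all $\phi\neq 0$, $$C_a\, f(\phi\mid \mathrm{HS+})\le \frac{a\,2^{a-1}}{\sqrt{\pi}\,|\phi|^{1+2a}}\,\Gamma_L\!\left(0.5+a,\tfrac{\phi^2}{2}\right)+\frac{a\,2^{-a-1}}{\sqrt{\pi}\,|\phi|^{1-2a}}\,\Gamma_U\!\left(0.5-a,\tfrac{\phi^2}{2}\right)\le D_a\, f(\phi\mid \mathrm{HTHS+}).$$
   Context: Under both priors, $\phi\mid\gamma\sim\mathcal{N}(0,1/\gamma)$ with $\gamma>0$. Under HS+, $\gamma$ has density $\pi(\gamma)=\frac{\gamma^{-1/2}\log\gamma}{\pi^2(\gamma-1)}$ on $(0,\infty)$. Under HTHS+, $\gamma$ has the log-Cauchy density $\pi(\gamma)=\frac{2}{\gamma\left((\log\gamma)^2+4\pi^2\right)}$ on $(0,\infty)$. The marginal density of $\phi$ is $f(\phi)=\int_0^\infty \mathcal{N}(\phi\mid 0,1/\gamma)\pi(\gamma)\,\mathrm{d}\gamma$. $\Gamma_L(s,x)=\int_0^x t^{s-1}e^{-t}\,\mathrm{d}t$ and $\Gamma_U(s,x)=\int_x^\infty t^{s-1}e^{-t}\,\mathrm{d}t$ are the lower and upper incomplete gamma functions. *)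

From HB Require Import structures.
From mathcomp Require Import all_boot all_order all_algebra.
From mathcomp Require Import all_classical all_reals all_analysis.
Set Implicit Arguments. Unset Strict Implicit. Unset Printing Implicit Defensive.
Import Order.TTheory GRing.Theory Num.Theory.
Import numFieldNormedType.Exports.
Local Open Scope classical_set_scope.
Local Open Scope ring_scope.

Section Defs.
Variable R : realType.

Definition normal_prec (gam phi : R) : R :=
  Num.sqrt (gam / (2 * pi)) * expR (- (gam * phi ^+ 2) / 2).

Definition hsplus_dens (gam : R) : R :=
  (gam `^ (- (1/2)) * ln gam) / (pi ^+ 2 * (gam - 1)).

(* HTHS+ (log-Cauchy) mixing density of gamma on (0,oo) *)
Definition hthsplus_dens (gam : R) : R :=
  2 / (gam * ((ln gam) ^+ 2 + 4 * pi ^+ 2)).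

Definition marginal (dens : R -> R) (phi : R) : \bar R :=
  (\int[lebesgue_measure]_(gam in `]0%R, +oo[) (normal_prec gam phi * dens gam)%:E)%E.

Definition f_HS (phi : R) : \bar R := marginal hsplus_dens phi.
Definition f_HTHS (phi : R) : \bar R := marginal hthsplus_dens phi.

Definition GammaL (s x : R) : \bar R :=
  (\int[lebesgue_measure]_(t in `]0%R, x[) (t `^ (s - 1) * expR (- t))%:E)%E.
Definition GammaU (s x : R) : \bar R :=
  (\int[lebesgue_measure]_(t in `]x, +oo[) (t `^ (s - 1) * expR (- t))%:E)%E.

End Defs.

From HB Require Import structures.
From mathcomp Require Import all_boot all_order all_algebra.
From mathcomp Require Import all_classical all_reals all_analysis.
From mathcomp Require Import measurable_realfun ring lra.
Import Order.TTheory GRing.Theory Num.Theory.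
Import numFieldNormedType.Exports.
Local Open Scope classical_set_scope.
Local Open Scope ring_scope.

(* The middle term is the marginal of phi under the log-Laplace mixing density
   (a/2) min(gam^(a-1), gam^(-a-1)), i.e. log gam ~ Laplace(0, 1/a): the
   substitution t = gam phi^2/2 turns its parts over gam < 1 and gam > 1 into the
   two incomplete gamma terms.  Marginals are monotone and homogeneous in the
   mixing density, so it suffices to compare densities.  In L = log gam the three
   densities (times gam) are L / (2 pi^2 sinh(L/2)), (a/2) e^(-a|L|) and
   2 / (L^2 + 4 pi^2): the HS+ one decays like |L| e^(-|L|/2), faster than
   e^(-a|L|) because a < 1/2, while the HTHS+ one decays only like 1/L^2. *)

Section lebesgue_scale.
Context {R : realType}.
Local Notation mu := (@lebesgue_measure R).
Variable c : {posnum R}.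
Let cmul : measurableTypeR R -> measurableTypeR R := *%R c%:num.
Let mcmul : measurable_fun [set: measurableTypeR R] cmul :=
  @mulrl_measurable _ _ _.

Lemma lebesgue_measure_scale (A : set R) : measurable A ->
  mu A = pushforward (mscale c%:num%:nng mu) cmul A.
Proof.
apply: (@lebesgue_measure_unique R (pushforward _ cmul)) => _ [[x y] _ <-].
rewrite /= /pushforward /mscale /=.
have -> : cmul @^-1` `]x, y] = `]x / c%:num, y / c%:num]%classic.
  apply/seteqP; split => z /=;
    by rewrite !in_itv /= ltr_pdivrMr // ler_pdivlMr // ![z * _]mulrC.
rewrite !lebesgue_measure_itv /= !lte_fin ltr_pM2r ?invr_gt0 //.
case: ifP => _; last by rewrite mule0.
by rewrite -EFinM -mulrBl mulrCA mulfV ?mulr1.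
Qed.

Lemma ge0_integral_scale (D : set R) (f : R -> \bar R) :
  measurable D -> measurable_fun D f -> (forall x, D x -> (0 <= f x)%E) ->
  (\int[mu]_(x in D) f x =
   c%:num%:E * \int[mu]_(x in cmul @^-1` D) f (c%:num * x)%R)%E.
Proof.
move=> mD mf f0.
rewrite (eq_measure_integral (pushforward (mscale c%:num%:nng mu) cmul)); last first.
  by move=> A mA _; exact: lebesgue_measure_scale.
rewrite ge0_integral_pushforward //; last by move=> y /set_mem; exact: f0.
rewrite ge0_integral_mscale //=; last by move=> x; exact: f0.
- by rewrite -[X in measurable X]setTI; exact: mcmul.
- apply: measurable_comp mf _; [exact: mD | by move=> _ [x Dx <-] |].
  exact: measurable_funTS.
Qed.

End lebesgue_scale.

Section integral_split.
Context {R : realType}.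
Local Notation mu := (@lebesgue_measure R).

Lemma ge0_integral_itvoy_split (a b : R) (f : R -> \bar R) : a < b ->
  measurable_fun `]a, +oo[ f -> (forall x, a < x -> (0 <= f x)%E) ->
  (\int[mu]_(x in `]a, +oo[) f x =
   \int[mu]_(x in `]a, b[) f x + \int[mu]_(x in `]b, +oo[) f x)%E.
Proof.
move=> ab mf f0.
have itvE : `]a, +oo[%classic = `]a, b[ `|` `[b, +oo[ :> set R.
  apply/seteqP; split => x /=; rewrite !in_itv /= ?andbT.
    by move=> ax; have [xb|bx] := ltP x b; [left; rewrite ax | right].
  by case=> [/andP[]//|]; exact: lt_le_trans.
have mfU : measurable_fun (`]a, b[ `|` `[b, +oo[ : set R) f by rewrite -itvE.
have f0U x : (`]a, b[ `|` `[b, +oo[ : set R) x -> (0 <= f x)%E.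
  by rewrite -itvE /= in_itv /= andbT; exact: f0.
have disj : [disjoint (`]a, b[ : set R) & `[b, +oo[].
  apply/disj_setPS => x [] /=; rewrite !in_itv /= => /andP[_ xb] /andP[bx _].
  by move: (lt_le_trans xb bx); rewrite ltxx.
rewrite itvE (ge0_integral_setU mu (measurable_itv _) (measurable_itv _) mfU f0U disj).
congr (_ + _)%E.
rewrite integral_itv_obnd_cbnd //; apply: measurable_funS mf => //.
by move=> x /=; rewrite !in_itv /= !andbT; exact: lt_trans.
Qed.

End integral_split.

Section measurable_inv.
Context {R : realType}.

Lemma measurable_inv : measurable_fun [set: R] (@GRing.inv R).
Proof.
have -> : [set: R] = (`]-oo, 0[ `|` [set 0]) `|` `]0, +oo[.
  apply/seteqP; split => x //= _; rewrite !in_itv /=.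
  by case: (ltgtP x 0) => h; [left; left | right | left; right].
apply/measurable_funU => //; first exact: measurableU.
split; first (apply/measurable_funU => //; split; last exact: measurable_fun_set1).
  apply: open_continuous_measurable_fun; first exact: interval_open.
  by move=> x; rewrite inE /= in_itv /= => x0; apply: inv_continuous; rewrite lt_eqF.
apply: open_continuous_measurable_fun; first exact: interval_open.
by move=> x; rewrite inE /= in_itv /= andbT => x0; apply: inv_continuous; rewrite gt_eqF.
Qed.

End measurable_inv.

Local Ltac measurable_fun_tac := repeat first
  [ exact: measurable_cst | exact: measurable_id
  | apply: measurable_funM | apply: measurable_funD | apply: measurable_funB
  | apply: measurable_funN | apply: measurable_minr
  | apply: (measurableT_comp (@measurable_expR _))
  | apply: (measurableT_comp (@measurable_ln _))
  | apply: (measurableT_comp (measurable_powR _))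
  | apply: (measurableT_comp (@measurable_inv _))
  | apply: (measurableT_comp (continuous_measurable_fun (@sqrt_continuous _))) ].

Section exp_inequalities.
Context {R : realType}.

Lemma expR_ge_addexpRN (x t : R) : 0 <= t -> x + expR (- t) <= expR x.
Proof.
move=> t0; apply: le_trans (expR_ge1Dx x).
by rewrite addrC lerD2r expR_le1 oppr_le0.
Qed.

Lemma sqr_le_expR (y : R) : 0 <= y -> y ^+ 2 <= 4 * expR y.
Proof.
move=> y0.
have half_le : y / 2 <= expR (y / 2) by have := expR_ge1Dx (y / 2); lra.
have : (y / 2) ^+ 2 <= expR (y / 2) ^+ 2.
  by rewrite lerXn2r ?nnegrE ?expR_ge0 ?divr_ge0.
by rewrite -expRM_natl (_ : 2%:R * (y / 2) = y); [lra | field].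
Qed.

(* For either sign of [L], multiply [expR_ge_addexpRN] at [x = (1/2 - a) |L|],
   [t = (1/2 + a) |L|] by [expR (L / 2)]. *)
Lemma halfexp_ratio_le_expRN (a L : R) : 0 <= a ->
  (1/2 - a) * (L * expR (L / 2) / (expR L - 1)) <= expR (- (a * `|L|)).
Proof.
move=> a0; have eh := expR_gt0 (L / 2).
have [L0|L0|->] := ltgtP L 0; last by rewrite !mul0r mulr0 expR_ge0.
- have key := expR_ge_addexpRN ((1/2 - a) * - L) ((1/2 + a) * - L) ltac:(nra).
  have := ler_wpM2l (ltW eh) key.
  rewrite ltr0_norm // mulrDr -!expRD => {}key.
  rewrite mulrA ler_ndivrMr ?subr_lt0 ?expR_lt1 //.
  have -> : expR (- (a * - L)) * (expR L - 1)
      = expR (L / 2 + - ((1/2 + a) * - L)) - expR (L / 2 + (1/2 - a) * - L).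
    by rewrite mulrBr mulr1 -expRD; congr (expR _ - expR _); field.
  lra.
- have key := expR_ge_addexpRN ((1/2 - a) * L) ((1/2 + a) * L) ltac:(nra).
  have := ler_wpM2l (ltW eh) key.
  rewrite gtr0_norm // mulrDr -!expRD => {}key.
  rewrite mulrA ler_pdivrMr ?subr_gt0 ?expR_gt1 //.
  have -> : expR (- (a * L)) * (expR L - 1)
      = expR (L / 2 + (1/2 - a) * L) - expR (L / 2 + - ((1/2 + a) * L)).
    by rewrite mulrBr mulr1 -expRD; congr (expR _ - expR _); field.
  lra.
Qed.

Lemma expRN_abs_mul_le (a L K : R) : 0 < a -> 0 <= K ->
  expR (- (a * `|L|)) * (L ^+ 2 + K) <= 4 / a ^+ 2 + K.
Proof.
move=> a0 K0; have e0 := expR_gt0 (- (a * `|L|)).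
have e1 : expR (- (a * `|L|)) <= 1 by rewrite expR_le1 oppr_le0 mulr_ge0 ?(ltW a0).
have : (a * `|L|) ^+ 2 <= 4 * expR (a * `|L|) by apply: sqr_le_expR; rewrite mulr_ge0 ?(ltW a0).
rewrite exprMn real_normK ?num_real // => sq_le.
have sq_decay : expR (- (a * `|L|)) * L ^+ 2 <= 4 / a ^+ 2.
  rewrite ler_pdivlMr ?exprn_gt0 // mulrAC.
  have eK : expR (- (a * `|L|)) * expR (a * `|L|) = 1.
    by rewrite -expRD addNr expR0.
  have := ler_wpM2l (ltW e0) sq_le.
  by rewrite mulrA [_ * (4 * _)]mulrCA eK mulr1.
rewrite mulrDr; nra.
Qed.

End exp_inequalities.

Section densities.
Context {R : realType}.

Definition loglaplace_dens (a gam : R) : R :=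
  a / 2 * Num.min (gam `^ (a - 1)) (gam `^ (- a - 1)).

Lemma measurable_normal_prec (phi : R) :
  measurable_fun [set: R] (fun gam => normal_prec gam phi).
Proof. rewrite /normal_prec; measurable_fun_tac. Qed.

Lemma measurable_hsplus_dens : measurable_fun [set: R] (@hsplus_dens R).
Proof. rewrite /hsplus_dens; measurable_fun_tac. Qed.

Lemma measurable_hthsplus_dens : measurable_fun [set: R] (@hthsplus_dens R).
Proof. rewrite /hthsplus_dens; measurable_fun_tac. Qed.

Lemma measurable_loglaplace_dens (a : R) :
  measurable_fun [set: R] (loglaplace_dens a).
Proof. rewrite /loglaplace_dens; measurable_fun_tac. Qed.

Lemma normal_prec_ge0 (gam phi : R) : 0 <= normal_prec gam phi.
Proof. by rewrite /normal_prec mulr_ge0 ?sqrtr_ge0 ?expR_ge0. Qed.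

Lemma hsplus_dens_ge0 (x : R) : 0 < x -> 0 <= hsplus_dens x.
Proof.
move=> x0; have p0 : 0 <= pi ^+ 2 :> R by exact: sqr_ge0.
rewrite /hsplus_dens; have [x1|x1] := leP x 1.
- rewrite -mulrNN -invrN -!mulrN divr_ge0 //.
    by rewrite mulr_ge0 ?powR_ge0 // oppr_ge0 ln_le0.
  by rewrite mulr_ge0 // oppr_ge0 subr_le0.
- rewrite divr_ge0 // mulr_ge0 ?powR_ge0 ?ln_ge0 ?subr_ge0 //; exact: ltW.
Qed.

Lemma hthsplus_dens_ge0 (x : R) : 0 < x -> 0 <= hthsplus_dens x.
Proof.
move=> x0; rewrite /hthsplus_dens divr_ge0 // mulr_ge0 ?(ltW x0) //.
by rewrite addr_ge0 ?sqr_ge0 // mulr_ge0 ?sqr_ge0.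
Qed.

Lemma loglaplace_dens_ge0 (a x : R) : 0 <= a -> 0 <= loglaplace_dens a x.
Proof. by move=> a0; rewrite mulr_ge0 ?divr_ge0 // le_min !powR_ge0. Qed.

Lemma loglaplace_dens_le1 (a x : R) : 0 <= a -> 0 < x <= 1 ->
  loglaplace_dens a x = a / 2 * x `^ (a - 1).
Proof.
move=> a0 x01; congr (_ * _); apply/min_idPl.
by apply: ger_powR => //; lra.
Qed.

Lemma loglaplace_dens_ge1 (a x : R) : 0 <= a -> 1 <= x ->
  loglaplace_dens a x = a / 2 * x `^ (- a - 1).
Proof.
move=> a0 x1; congr (_ * _); apply/min_idPr.
by apply: ler_powR => //; lra.
Qed.

Lemma loglaplace_dens_expR (a L : R) : 0 <= a ->
  loglaplace_dens a (expR L) = a / 2 * expR (- (a * `|L|)) / expR L.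
Proof.
move=> a0; rewrite -mulrA; have [L0|L0] := leP L 0.
- rewrite loglaplace_dens_le1 ?expR_gt0 ?expR_le1 // -(@expRM R) ler0_norm //.
  rewrite -expRB; congr (_ * expR _); ring.
- rewrite loglaplace_dens_ge1 //; last by apply/ltW; rewrite expR_gt1.
  rewrite -(@expRM R) gtr0_norm // -expRB; congr (_ * expR _); ring.
Qed.

Lemma hsplus_dens_expR (L : R) :
  hsplus_dens (expR L) = L * expR (L / 2) / (pi ^+ 2 * (expR L - 1)) / expR L.
Proof.
rewrite /hsplus_dens -(@expRM R) expRK.
have -> : expR (L * - (1 / 2)) = expR (L / 2) / expR L.
  by rewrite -expRB; congr expR; field.
set d := (_ * (_ - 1))^-1; set e := expR L; ring.
Qed.

Lemma hthsplus_dens_expR (L : R) :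
  hthsplus_dens (expR L) = 2 / (L ^+ 2 + 4 * pi ^+ 2) / expR L.
Proof.
rewrite /hthsplus_dens expRK invfM.
set d := (_ + _)^-1; set e := expR L; ring.
Qed.

Lemma hsplus_le_loglaplace (a x : R) : 0 <= a -> 0 < x ->
  a / 2 * ((1 / 2 - a) * pi ^+ 2) * hsplus_dens x <= loglaplace_dens a x.
Proof.
move=> a0 x0; rewrite -(lnK (x := x)) ?posrE //; set L := ln x.
rewrite hsplus_dens_expR loglaplace_dens_expR //.
have pi0 : pi ^+ 2 != 0 :> R by rewrite expf_neq0 // gt_eqF ?pi_gt0.
have -> : a / 2 * ((1 / 2 - a) * pi ^+ 2) *
    (L * expR (L / 2) / (pi ^+ 2 * (expR L - 1)) / expR L) =
    a / 2 * ((1 / 2 - a) * (L * expR (L / 2) / (expR L - 1))) / expR L.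
  move: pi0; rewrite invfM; set p := pi ^+ 2; set d := (expR L - 1)^-1 => pi0.
  by field; rewrite gt_eqF ?expR_gt0.
apply: ler_wpM2r; first by rewrite invr_ge0 expR_ge0.
by apply: ler_wpM2l; [rewrite divr_ge0 | exact: halfexp_ratio_le_expRN].
Qed.

Lemma loglaplace_le_hthsplus (a x : R) : 0 < a -> 0 < x ->
  loglaplace_dens a x <= a / 2 * ((4 / a ^+ 2 + 4 * pi ^+ 2) / 2) * hthsplus_dens x.
Proof.
move=> a0 x0; rewrite -(lnK (x := x)) ?posrE //; set L := ln x.
rewrite hthsplus_dens_expR (loglaplace_dens_expR _ _ (ltW a0)).
have P0 : 0 < L ^+ 2 + 4 * pi ^+ 2.
  by rewrite ltr_wpDl ?sqr_ge0 // mulr_gt0 // exprn_gt0 // pi_gt0.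
rewrite [X in _ <= X]mulrA; apply: ler_wpM2r; first by rewrite invr_ge0 expR_ge0.
rewrite -[X in _ <= X]mulrA; apply: ler_wpM2l; first by rewrite divr_ge0 ?ltW.
rewrite (_ : _ / 2 * _ = (4 / a ^+ 2 + 4 * pi ^+ 2) / (L ^+ 2 + 4 * pi ^+ 2)).
  by rewrite ler_pdivlMr //; apply: expRN_abs_mul_le a0 _; rewrite mulr_ge0 // sqr_ge0.
by move: P0; set P := L ^+ 2 + _ => P0; field; rewrite !gt_eqF.
Qed.

End densities.

Section marginal.
Context {R : realType}.

Lemma marginalZ (c : R) (dens : R -> R) (phi : R) : 0 <= c ->
  measurable_fun [set: R] dens -> (forall gam, 0 < gam -> 0 <= dens gam) ->
  marginal (fun gam => c * dens gam) phi = (c%:E * marginal dens phi)%E.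
Proof.
move=> c0 md d0; rewrite /marginal -ge0_integralZl_EFin //.
- by apply: eq_integral => gam _; rewrite -EFinM mulrCA.
- move=> gam; rewrite /= in_itv /= andbT => gam0.
  by rewrite lee_fin mulr_ge0 ?normal_prec_ge0 ?d0.
- apply/measurable_EFinP/measurable_funTS.
  exact: measurable_funM (measurable_normal_prec phi) md.
Qed.

Lemma le_marginal (dens1 dens2 : R -> R) (phi : R) :
  measurable_fun [set: R] dens1 -> measurable_fun [set: R] dens2 ->
  (forall gam, 0 < gam -> 0 <= dens1 gam) ->
  (forall gam, 0 < gam -> dens1 gam <= dens2 gam) ->
  (marginal dens1 phi <= marginal dens2 phi)%E.
Proof.
move=> md1 md2 d10 d12; apply: ge0_le_integral => //.
- move=> gam; rewrite /= in_itv /= andbT => gam0.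
  by rewrite lee_fin mulr_ge0 ?normal_prec_ge0 ?d10.
- apply/measurable_EFinP/measurable_funTS.
  exact: measurable_funM (measurable_normal_prec phi) md1.
- apply/measurable_EFinP/measurable_funTS.
  exact: measurable_funM (measurable_normal_prec phi) md2.
- move=> gam; rewrite /= in_itv /= andbT => gam0.
  by rewrite lee_fin ler_wpM2l ?normal_prec_ge0 ?d12.
Qed.

End marginal.

Section incomplete_gamma.
Context {R : realType}.
Local Notation mu := (@lebesgue_measure R).

Lemma ge0_integral_gamma_scale (s c : R) (D : set R) : 0 < c -> measurable D ->
  (forall t, D t -> 0 <= t) ->
  (\int[mu]_(t in D) (t `^ (s - 1) * expR (- t))%:E =
   (c `^ s)%:E *
   \int[mu]_(x in ( *%R c) @^-1` D) (x `^ (s - 1) * expR (- (c * x)))%:E)%E.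
Proof.
move=> c0 mD D0.
have mD' : measurable (( *%R c) @^-1` D).
  by rewrite -[X in measurable X]setTI; exact: mulrl_measurable.
rewrite (ge0_integral_scale (PosNum c0)) //=; first last.
- by move=> t _; rewrite lee_fin mulr_ge0 ?powR_ge0 ?expR_ge0.
- by apply/measurable_EFinP/measurable_funTS; measurable_fun_tac.
under eq_integral => x.
  rewrite inE /= => /D0; rewrite pmulr_rge0 // => x0.
  rewrite powRM ?(ltW c0) // -mulrA EFinM.
  over.
rewrite /= ge0_integralZl_EFin ?powR_ge0 //.
- rewrite muleA -EFinM; congr (_%:E * _)%E.
  rewrite -[X in X * _](powRr1 (ltW c0)) -powRD; first by rewrite addrC subrK.
  by apply/implyP => _; rewrite gt_eqF.
- by move=> x _; rewrite lee_fin mulr_ge0 ?powR_ge0 ?expR_ge0.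
- by apply/measurable_EFinP/measurable_funTS; measurable_fun_tac.
Qed.

Lemma GammaL_scale (s c : R) : 0 < c ->
  GammaL s c =
  ((c `^ s)%:E * \int[mu]_(x in `]0%R, 1%R[) (x `^ (s - 1) * expR (- (c * x)))%:E)%E.
Proof.
move=> c0; rewrite /GammaL (ge0_integral_gamma_scale s _ _ c0) //.
- congr (_ * integral _ _ _)%E; apply/seteqP; split => x /=; rewrite !in_itv /=;
    by move=> /andP[? ?]; apply/andP; split; nra.
- by move=> t /=; rewrite in_itv /= => /andP[/ltW].
Qed.

Lemma GammaU_scale (s c : R) : 0 < c ->
  GammaU s c =
  ((c `^ s)%:E * \int[mu]_(x in `]1%R, +oo[) (x `^ (s - 1) * expR (- (c * x)))%:E)%E.
Proof.
move=> c0; rewrite /GammaU (ge0_integral_gamma_scale s _ _ c0) //.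
- congr (_ * integral _ _ _)%E; apply/seteqP; split => x /=;
    by rewrite !in_itv /= !andbT; nra.
- by move=> t /=; rewrite in_itv /= andbT => /(lt_trans c0)/ltW.
Qed.

End incomplete_gamma.

Section loglaplace_marginal.
Context {R : realType}.

Lemma normal_prec_mul_powR (phi s x : R) : 0 < x ->
  normal_prec x phi * x `^ (s - 3 / 2) =
  x `^ (s - 1) * expR (- (phi ^+ 2 / 2 * x)) / Num.sqrt (2 * pi).
Proof.
move=> x0; have pi0 := pi_gt0 R.
rewrite /normal_prec sqrtrM ?(ltW x0) // sqrtrV ?mulr_ge0 ?(ltW pi0) //.
rewrite -powR12_sqrt ?(ltW x0) //.
have -> : x `^ (s - 1) = x `^ (2^-1) * x `^ (s - 3 / 2).
  rewrite -powRD; last by apply/implyP => _; rewrite gt_eqF.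
  by congr powR; field.
rewrite (_ : - (x * phi ^+ 2) / 2 = - (phi ^+ 2 / 2 * x)); last by field.
by set e := expR _; set r := Num.sqrt _; ring.
Qed.

Lemma incgamma_coefE (a s phi : R) : phi != 0 ->
  a * 2 `^ (s - 3 / 2) / (Num.sqrt pi * `|phi| `^ (2 * s)) * (phi ^+ 2 / 2) `^ s =
  a / 2 / Num.sqrt (2 * pi).
Proof.
move=> phi0; have phi_gt0 : 0 < `|phi| by rewrite normr_gt0.
have sq0 : 0 < phi ^+ 2 by rewrite -real_normK ?num_real // exprn_gt0.
have powRE (x r : R) : 0 < x -> x `^ r = expR (r * ln x).
  by move=> x0; rewrite /powR gt_eqF.
have lnc : ln (phi ^+ 2 / 2) = 2 * ln `|phi| - ln 2.
  by rewrite ln_div ?posrE // -real_normK ?num_real // lnXn // mulr_natl.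
have sqrt2 : Num.sqrt 2 = expR (ln 2 / 2) :> R.
  by rewrite -powR12_sqrt // powRE // mulrC.
rewrite !powRE ?divr_gt0 // lnc sqrtrM // sqrt2.
set l := ln `|phi|; set l2 := ln 2; set q := Num.sqrt pi.
have q0 : 0 < q by rewrite sqrtr_gt0 pi_gt0.
have E : expR ((s - 3 / 2) * l2) * expR (s * (2 * l - l2)) =
    expR (2 * s * l) / (2 * expR (l2 / 2)).
  rewrite -[X in X * expR (l2 / 2)](lnK (x := 2)) ?posrE // -/l2 -!expRD -expRB.
  by congr expR; field.
transitivity (a * (expR ((s - 3 / 2) * l2) * expR (s * (2 * l - l2))) /
    (q * expR (2 * s * l))).
  by field; rewrite !gt_eqF ?expR_gt0.
by rewrite E; field; rewrite !gt_eqF ?expR_gt0.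
Qed.

Lemma marginal_loglaplace (a phi : R) : 0 <= a -> phi != 0 ->
  marginal (loglaplace_dens a) phi =
  ((a * 2 `^ (a - 1) / (Num.sqrt pi * `|phi| `^ (1 + 2 * a)))%:E
     * GammaL (1 / 2 + a) (phi ^+ 2 / 2)
   + (a * 2 `^ (- a - 1) / (Num.sqrt pi * `|phi| `^ (1 - 2 * a)))%:E
     * GammaU (1 / 2 - a) (phi ^+ 2 / 2))%E.
Proof.
move=> a0 phi0; set c := phi ^+ 2 / 2; set K := a / 2 / Num.sqrt (2 * pi).
have c0 : 0 < c by rewrite divr_gt0 // -real_normK ?num_real // exprn_gt0 ?normr_gt0.
have K0 : 0 <= K by rewrite !divr_ge0 ?sqrtr_ge0.
have coefL : a * 2 `^ (a - 1) / (Num.sqrt pi * `|phi| `^ (1 + 2 * a)) * c `^ (1 / 2 + a) = K.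
  rewrite /K -(incgamma_coefE a (1 / 2 + a) phi phi0).
  by congr (a * 2 `^ _ / (_ * _ `^ _) * _); lra.
have coefU : a * 2 `^ (- a - 1) / (Num.sqrt pi * `|phi| `^ (1 - 2 * a)) * c `^ (1 / 2 - a) = K.
  rewrite /K -(incgamma_coefE a (1 / 2 - a) phi phi0).
  by congr (a * 2 `^ _ / (_ * _ `^ _) * _); lra.
rewrite GammaL_scale // GammaU_scale // !muleA -!EFinM coefL coefU.
have integrand_ge0 s x : (0 <= (x `^ (s - 1) * expR (- (c * x)))%:E)%E.
  by rewrite lee_fin mulr_ge0 ?powR_ge0 ?expR_ge0.
have mintegrand s D : measurable_fun D (fun x => (x `^ (s - 1) * expR (- (c * x)))%:E).
  by apply/measurable_EFinP/measurable_funTS; measurable_fun_tac.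
rewrite /marginal (ge0_integral_itvoy_split _ _ _ ltr01); last 2 first.
- apply/measurable_EFinP/measurable_funTS.
  exact: measurable_funM (measurable_normal_prec phi) (measurable_loglaplace_dens a).
- by move=> x _; rewrite lee_fin mulr_ge0 ?normal_prec_ge0 ?loglaplace_dens_ge0.
rewrite -!ge0_integralZl_EFin //; [|exact: mintegrand..].
congr (_ + _)%E; apply: eq_integral => x; rewrite inE /= in_itv /= ?andbT.
- move=> /andP[x0 x1]; rewrite -EFinM; congr EFin.
  rewrite loglaplace_dens_le1 ?x0 ?(ltW x1) // mulrCA.
  rewrite (_ : a - 1 = 1 / 2 + a - 3 / 2); last by lra.
  by rewrite normal_prec_mul_powR // /K /c; ring.
- move=> x1; rewrite -EFinM; congr EFin.
  rewrite loglaplace_dens_ge1 ?(ltW x1) // mulrCA.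
  rewrite (_ : - a - 1 = 1 / 2 - a - 3 / 2); last by lra.
  by rewrite normal_prec_mul_powR ?(lt_trans ltr01) // /K /c; ring.
Qed.

End loglaplace_marginal.

Theorem theorem2 (R : realType) (a : R) (ha0 : 0 < a) (ha1 : a < 1 / 2) :
  exists C D : R, 0 < C /\ 0 < D /\
    forall phi : R, phi != 0 ->
      let mid : \bar R :=
        ((a * 2 `^ (a - 1) / (Num.sqrt pi * `|phi| `^ (1 + 2 * a)))%:E
           * GammaL (1 / 2 + a) (phi ^+ 2 / 2)
         + (a * 2 `^ (- a - 1) / (Num.sqrt pi * `|phi| `^ (1 - 2 * a)))%:E
           * GammaU (1 / 2 - a) (phi ^+ 2 / 2))%E in
      (C%:E * f_HS phi <= mid)%E /\ (mid <= D%:E * f_HTHS phi)%E.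
Proof.
have pi0 : 0 < pi :> R := pi_gt0 R.
set C := a / 2 * ((1 / 2 - a) * pi ^+ 2).
set D := a / 2 * ((4 / a ^+ 2 + 4 * pi ^+ 2) / 2).
have C0 : 0 < C by rewrite !mulr_gt0 ?exprn_gt0 // subr_gt0.
have D0 : 0 < D by rewrite !mulr_gt0 ?addr_gt0 ?divr_gt0 ?exprn_gt0 ?mulr_gt0.
exists C, D; do 2 split => //; move=> phi phi0 mid.
rewrite /mid -marginal_loglaplace ?(ltW ha0) // /f_HS /f_HTHS.
rewrite -!marginalZ ?(ltW C0) ?(ltW D0) //; [|exact: measurable_hthsplus_dens
  | exact: hthsplus_dens_ge0 | exact: measurable_hsplus_dens | exact: hsplus_dens_ge0].
split; apply: le_marginal => [| | gam gam0 | gam gam0].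
- exact: measurable_funM (measurable_cst C) measurable_hsplus_dens.
- exact: measurable_loglaplace_dens.
- by rewrite mulr_ge0 ?(ltW C0) ?hsplus_dens_ge0.
- exact: hsplus_le_loglaplace (ltW ha0) gam0.
- exact: measurable_loglaplace_dens.
- exact: measurable_funM (measurable_cst D) measurable_hthsplus_dens.
- exact: loglaplace_dens_ge0 (ltW ha0).
- exact: loglaplace_le_hthsplus ha0 gam0.
Qed.
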